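(* Let $p\in(0,1)$, $\gamma>0$, $B>0$, $w\in\mathbb{N}$, and for each $N\in\mathbb{N}$ let $(\xi_j^{(N)*})_{j=1}^N$ be the unique maximizer of $\mathcal{T}_N$. Then for every fixed $j\in\mathbb{N}$, the sequence $(\xi_j^{(N)*})_{N\ge j}$ is strictly decreasing in $N$; that is, $\xi_j^{(N+1)*}<\xi_j^{(N)*}$ for all $N\ge j$.
   Context: Logarithms are base 2. For an admissible (nonnegative, with sum at most $B$) sequence $(x_j)_{j\ge1}$, $$\mathcal{T}_\infty(x_1,x_2,\dots)=\sum_{k=1}^{w}p^2(1-p)^{k-1}\frac{k}{2}\log_2\!\Big(1+\gamma\frac{B}{k}\Big)+\sum_{j=1}^{\infty}p(1-p)^{j+w-1}\frac12\log_2(1+\gamma x_j)+\sum_{k=1}^{\infty}p^2(1-p)^{k+w-1}\frac{w}{2}\log_2\!\Big(1+\gamma\frac{B-\sum_{j=1}^{k}x_j}{w}\Big).$$ For $N\in\mathbb{N}$ and $\xi_1,\dots,\xi_N\ge0$ with $\sum_{j=1}^N\xi_j\le B$, define $\mathcal{T}_N(\xi_1,\dots,\xi_N)=\mathcal{T}_\infty(\xi_1,\dots,\xi_N,0,0,\dots)$. $\mathcal{T}_N$ has a unique maximizer over this compact set, denoted $(\xi_j^{(N)*})_{j=1}^N$. *)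

From Stdlib Require Import Reals.
From Coquelicot Require Import Coquelicot.
Open Scope R_scope.

Definition log2 (x : R) : R := ln x / ln 2.

(* Sequences are indexed 1,2,3,...: x : nat -> R, value at 0 is ignored. *)

Definition psum (x : nat -> R) (k : nat) : R := sum_n_m x 1 k.

Definition T_inf (p gamma B : R) (w : nat) (x : nat -> R) : R :=
  sum_n_m (fun k => p ^ 2 * (1 - p) ^ (k - 1) * (INR k / 2)
                     * log2 (1 + gamma * (B / INR k))) 1 w
  + Series (fun n => let j := S n in
      p * (1 - p) ^ (j + w - 1) * (1 / 2) * log2 (1 + gamma * x j))
  + Series (fun n => let k := S n in
      p ^ 2 * (1 - p) ^ (k + w - 1) * (INR w / 2)
        * log2 (1 + gamma * ((B - psum x k) / INR w))).

Definition pad (N : nat) (xi : nat -> R) : nat -> R :=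
  fun j => if andb (Nat.leb 1 j) (Nat.leb j N) then xi j else 0.

Definition T_N (p gamma B : R) (w N : nat) (xi : nat -> R) : R :=
  T_inf p gamma B w (pad N xi).

Definition feasible (B : R) (N : nat) (xi : nat -> R) : Prop :=
  (forall j, (1 <= j <= N)%nat -> 0 <= xi j) /\ psum xi N <= B.

Definition is_maximizer (p gamma B : R) (w N : nat) (xi : nat -> R) : Prop :=
  feasible B N xi /\
  forall eta, feasible B N eta -> T_N p gamma B w N eta <= T_N p gamma B w N xi.

From Stdlib Require Import Reals Lra Lia.
From Coquelicot Require Import Coquelicot.
Open Scope R_scope.

(* Up to the constant [T_head], T_N is
     sum_{j<=N} a_j rate(x_j) + sum_{k<=N} b_k residual_rate(S_k) + c_N residual_rate(S_N),
   where S_k are the partial sums, rate t = log2 (1 + gamma t), residual_rate s = rate ((B - s)/w)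
   and c_N = sum_{k>N} b_k.  Moving mass between coordinates j and j+1, or adding mass to
   coordinate N, yields first-order conditions.  Since a_j - a_{j+1} = b_j / w and
   rate'(0) = w h(B), where h = - residual_rate' is increasing, these conditions fail at every
   boundary point, so the maximizer is interior and satisfies
     a_{j+1} rate'(x_{j+1}) = a_j rate'(x_j) - b_j h(S_j),    a_N rate'(x_N) = (b_N + c_N) h(S_N).
   As rate' is decreasing, the recursion makes the whole maximizer monotone in its first
   coordinate.  If the first coordinate of the (N+1)-maximizer were at least that of the
   N-maximizer, it would dominate it up to N, coordinatewise and in partial sums; but since
   c_N = b_{N+1} + c_{N+1} and its last coordinate is positive, it then overshoots the terminal
   condition of the N-maximizer.  So the first coordinate strictly decreases, and the recursion
   propagates the strict inequality to every coordinate. *)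

Lemma psum_0 x : psum x 0 = 0.
Proof. unfold psum. rewrite sum_n_m_zero; [reflexivity | lia]. Qed.

Lemma psum_S x k : psum x (S k) = psum x k + x (S k).
Proof. unfold psum. rewrite sum_n_Sm; [reflexivity | lia]. Qed.

Lemma psum_le_psum x k n : (forall i, (k < i <= n)%nat -> 0 <= x i) -> (k <= n)%nat ->
  psum x k <= psum x n.
Proof.
  intros Hx Hkn. induction Hkn as [|n Hkn IH]; [lra|].
  rewrite psum_S. assert (0 <= x (S n)) by (apply Hx; lia).
  assert (psum x k <= psum x n) by (apply IH; intros; apply Hx; lia). lra.
Qed.

Lemma feasible_psum_le B N x k : feasible B N x -> (k <= N)%nat -> psum x k <= B.
Proof.
  intros [Hx Hs] Hk.
  assert (psum x k <= psum x N) by (apply psum_le_psum; [intros; apply Hx; lia | exact Hk]). lra.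
Qed.

Lemma feasible_pred B N x : feasible B (S N) x -> feasible B N x.
Proof.
  intros Hx. split; [intros i Hi; apply Hx; lia | apply (feasible_psum_le _ (S N)); [exact Hx | lia]].
Qed.

Lemma pad_in N x j : (1 <= j <= N)%nat -> pad N x j = x j.
Proof.
  intros Hj. unfold pad.
  destruct (Nat.leb_spec 1 j), (Nat.leb_spec j N); simpl; lia || reflexivity.
Qed.

Lemma psum_pad N x k : psum (pad N x) k = psum x (Nat.min k N).
Proof.
  induction k as [|k IH]; [reflexivity|].
  rewrite psum_S, IH. unfold pad. destruct (Nat.leb_spec (S k) N).
  - rewrite Nat.min_l, Nat.min_l, psum_S by lia. reflexivity.
  - rewrite Nat.min_r, Nat.min_r, Bool.andb_false_r by lia. lra.
Qed.

Definition bump (x : nat -> R) (j : nat) (e : R) : nat -> R :=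
  fun i => if Nat.eqb i j then x i + e else x i.

Definition transfer (x : nat -> R) (j : nat) (e : R) : nat -> R :=
  bump (bump x j e) (S j) (- e).

Lemma psum_bump x j e k : (1 <= j)%nat ->
  psum (bump x j e) k = psum x k + if Nat.leb j k then e else 0.
Proof.
  intros Hj. induction k as [|k IH].
  - rewrite !psum_0. destruct (Nat.leb_spec j 0); [lia | lra].
  - rewrite !psum_S, IH. unfold bump.
    destruct (Nat.eqb_spec (S k) j), (Nat.leb_spec j k), (Nat.leb_spec j (S k)); lia || lra.
Qed.

Lemma psum_bump_upto x j e k : (1 <= j)%nat -> (k <= j)%nat ->
  psum (bump x j e) k = bump (psum x) j e k.
Proof.
  intros Hj Hk. rewrite psum_bump by lia. unfold bump.
  destruct (Nat.leb_spec j k), (Nat.eqb_spec k j); lia || lra.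
Qed.

Lemma psum_transfer x j e k : (1 <= j)%nat -> psum (transfer x j e) k = bump (psum x) j e k.
Proof.
  intros Hj. unfold transfer. rewrite !psum_bump by lia. unfold bump.
  destruct (Nat.leb_spec j k), (Nat.leb_spec (S j) k), (Nat.eqb_spec k j); lia || lra.
Qed.

Lemma sum_n_m_bump (f : nat -> R -> R) (u v : nat -> R) j e n : (1 <= j <= n)%nat ->
  (forall i, (1 <= i <= n)%nat -> v i = bump u j e i) ->
  sum_n_m (fun i => f i (v i)) 1 n
  = sum_n_m (fun i => f i (u i)) 1 n + (f j (u j + e) - f j (u j)).
Proof.
  revert j. induction n as [|n IH]; intros j Hj Hv; [lia|].
  rewrite !sum_n_Sm by lia. unfold plus; simpl. rewrite (Hv (S n)) by lia. unfold bump at 1.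
  destruct (Nat.eqb_spec (S n) j) as [<-|Hne].
  - rewrite (sum_n_m_ext_loc (fun i => f i (v i)) (fun i => f i (u i))); [ring|].
    intros i Hi. rewrite Hv by lia. unfold bump. destruct (Nat.eqb_spec i (S n)); [lia | reflexivity].
  - rewrite (IH j) by (lia || (intros; apply Hv; lia)). ring.
Qed.

Section Allocation.

Variables (p gamma B : R) (w : nat).
Hypotheses (Hp : 0 < p < 1) (Hgamma : 0 < gamma) (HB : 0 < B) (Hw : (1 <= w)%nat).

(** * Closed form of T_N *)

Lemma is_series_from_tail (a : nat -> R) n (l : R) :
  is_series (fun k => a (S n + k)%nat) l -> is_series a (sum_n a n + l).
Proof.
  intros Ha. apply (is_series_decr_n a (S n)); [lia|]. simpl pred.
  match goal with |- is_series _ ?L => replace L with l; [exact Ha|] end.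
  unfold plus, opp; simpl. change (l = sum_n a n + l + - sum_n a n). ring.
Qed.

Lemma is_series_zero : is_series (fun _ : nat => 0) 0.
Proof.
  assert (Hq : Rabs (1 / 2) < 1) by (rewrite Rabs_pos_eq; lra).
  assert (H0 := is_series_scal_r 0 _ _ (is_series_geom _ Hq)).
  rewrite Rmult_0_r in H0. eapply is_series_ext; [|exact H0]. intros n. apply Rmult_0_r.
Qed.

Definition coef_a (j : nat) : R := p * (1 - p) ^ (j + w - 1) * (1 / 2).
Definition coef_b (k : nat) : R := p ^ 2 * (1 - p) ^ (k + w - 1) * (INR w / 2).
(* [coef_c N] is the geometric tail [sum_{k > N} coef_b k]. *)
Definition coef_c (N : nat) : R := p * (1 - p) ^ (N + w) * (INR w / 2).

Definition rate (t : R) : R := log2 (1 + gamma * t).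
Definition residual_rate (s : R) : R := rate ((B - s) / INR w).

Definition T_head : R := sum_n_m (fun k => p ^ 2 * (1 - p) ^ (k - 1) * (INR k / 2)
                                       * log2 (1 + gamma * (B / INR k))) 1 w.

Definition objective (N : nat) (x : nat -> R) : R :=
  sum_n_m (fun j => coef_a j * rate (x j)) 1 N
  + sum_n_m (fun k => coef_b k * residual_rate (psum x k)) 1 N
  + coef_c N * residual_rate (psum x N).

Lemma rate_0 : rate 0 = 0.
Proof. unfold rate, log2. rewrite Rmult_0_r, Rplus_0_r, ln_1. lra. Qed.

Lemma is_series_rate_pad M x :
  is_series (fun n => coef_a (S n) * rate (pad (S M) x (S n)))
            (sum_n_m (fun j => coef_a j * rate (x j)) 1 (S M)).
Proof.
  rewrite (sum_n_m_ext_loc _ (fun j => coef_a j * rate (pad (S M) x j)));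
    [|intros j Hj; rewrite pad_in by lia; reflexivity].
  rewrite <- (Rplus_0_r (sum_n_m _ _ _)), <- sum_n_m_S.
  apply is_series_from_tail. eapply is_series_ext; [|exact is_series_zero].
  intros k. unfold pad. destruct (Nat.leb_spec (S (S M + k)) (S M)); [lia|].
  rewrite Bool.andb_false_r, rate_0. symmetry; apply Rmult_0_r.
Qed.

Lemma is_series_residual_pad M x :
  is_series (fun n => coef_b (S n) * residual_rate (psum (pad (S M) x) (S n)))
            (sum_n_m (fun k => coef_b k * residual_rate (psum x k)) 1 (S M)
             + coef_c (S M) * residual_rate (psum x (S M))).
Proof.
  rewrite <- sum_n_m_S.
  rewrite (sum_n_m_ext_loc _ (fun k => coef_b (S k) * residual_rate (psum (pad (S M) x) (S k))));
    [|intros k Hk; rewrite psum_pad, Nat.min_l by lia; reflexivity].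
  apply is_series_from_tail.
  assert (Hq : Rabs (1 - p) < 1) by (rewrite Rabs_pos_eq; lra).
  assert (G := is_series_scal_r (coef_b (S (S M)) * residual_rate (psum x (S M))) _ _
                 (is_series_geom _ Hq)).
  replace (coef_c (S M) * residual_rate (psum x (S M)))
    with (/ (1 - (1 - p)) * (coef_b (S (S M)) * residual_rate (psum x (S M)))).
  - eapply is_series_ext; [|exact G]. intros k. simpl.
    rewrite psum_pad, Nat.min_r by lia. unfold coef_b.
    replace (S (S (M + k)) + w - 1)%nat with (k + (S (S M) + w - 1))%nat by lia.
    rewrite pow_add. ring.
  - unfold coef_b, coef_c. replace (S (S M) + w - 1)%nat with (S M + w)%nat by lia.
    field. lra.
Qed.

Lemma T_N_objective N x : (1 <= N)%nat -> T_N p gamma B w N x = T_head + objective N x.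
Proof.
  intros HN. destruct N as [|M]; [lia|]. unfold T_N, T_inf.
  erewrite !is_series_unique by (apply is_series_residual_pad || apply is_series_rate_pad).
  unfold T_head, objective. ring.
Qed.

(** * Local perturbations and marginal gains *)

Lemma ln2_pos : 0 < ln 2.
Proof. rewrite <- ln_1. apply ln_increasing; lra. Qed.

Definition transfer_local (x : nat -> R) (j : nat) (e : R) : R :=
  coef_a j * rate (x j + e) + coef_a (S j) * rate (x (S j) - e)
  + coef_b j * residual_rate (psum x j + e).

Definition last_local (N : nat) (x : nat -> R) (e : R) : R :=
  coef_a N * rate (x N + e) + (coef_b N + coef_c N) * residual_rate (psum x N + e).

Lemma objective_transfer N x j e : (1 <= j)%nat -> (j < N)%nat ->
  objective N (transfer x j e) = objective N x + (transfer_local x j e - transfer_local x j 0).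
Proof.
  intros Hj HjN. unfold objective.
  rewrite (sum_n_m_bump (fun i t => coef_a i * rate t) (bump x j e) (transfer x j e) (S j) (- e))
    by (lia || reflexivity).
  rewrite (sum_n_m_bump (fun i t => coef_a i * rate t) x (bump x j e) j e) by (lia || reflexivity).
  rewrite (sum_n_m_bump (fun i t => coef_b i * residual_rate t) (psum x) (psum (transfer x j e)) j e)
    by (lia || (intros; apply psum_transfer; lia)).
  rewrite psum_transfer by lia. unfold bump, transfer_local.
  destruct (Nat.eqb_spec N j), (Nat.eqb_spec (S j) j); [lia ..|].
  rewrite !Rplus_0_r, Rminus_0_r. unfold Rminus. ring.
Qed.

Lemma objective_bump_last N x e : (1 <= N)%nat ->
  objective N (bump x N e) = objective N x + (last_local N x e - last_local N x 0).
Proof.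
  intros HN. unfold objective.
  rewrite (sum_n_m_bump (fun i t => coef_a i * rate t) x (bump x N e) N e) by (lia || reflexivity).
  rewrite (sum_n_m_bump (fun i t => coef_b i * residual_rate t) (psum x) (psum (bump x N e)) N e)
    by (lia || (intros; apply psum_bump_upto; lia)).
  rewrite psum_bump_upto by lia. unfold bump, last_local.
  rewrite Nat.eqb_refl, !Rplus_0_r. ring.
Qed.

Definition drate (t : R) : R := gamma / ((1 + gamma * t) * ln 2).
Definition marginal (j : nat) (t : R) : R := coef_a j * drate t.
Definition residual_marginal (s : R) : R := drate ((B - s) / INR w) / INR w.

Definition transfer_gain (x : nat -> R) (j : nat) : R :=
  marginal j (x j) - marginal (S j) (x (S j)) - coef_b j * residual_marginal (psum x j).

Definition last_gain (N : nat) (x : nat -> R) : R :=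
  marginal N (x N) - (coef_b N + coef_c N) * residual_marginal (psum x N).

Lemma INR_w_pos : 0 < INR w.
Proof. apply lt_0_INR. lia. Qed.

Lemma residual_share_nonneg s : s <= B -> 0 <= (B - s) / INR w.
Proof. intros Hs. apply Rdiv_le_0_compat; [lra | apply INR_w_pos]. Qed.

Lemma is_derive_transfer_local x j : 0 <= x j -> 0 <= x (S j) -> psum x j <= B ->
  is_derive (transfer_local x j) 0 (transfer_gain x j).
Proof.
  intros Hxj HxSj Hs.
  assert (Hr := residual_share_nonneg _ Hs). assert (Hw' := INR_w_pos). assert (Hl := ln2_pos).
  unfold transfer_local, transfer_gain, marginal, residual_marginal, drate, residual_rate, rate, log2.
  auto_derive; rewrite ?Ropp_0, ?Rplus_0_r, ?Rminus_0_r.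
  - repeat split; nra.
  - field. repeat split; nra.
Qed.

Lemma is_derive_last_local N x : 0 <= x N -> psum x N <= B ->
  is_derive (last_local N x) 0 (last_gain N x).
Proof.
  intros HxN Hs.
  assert (Hr := residual_share_nonneg _ Hs). assert (Hw' := INR_w_pos). assert (Hl := ln2_pos).
  unfold last_local, last_gain, marginal, residual_marginal, drate, residual_rate, rate, log2.
  auto_derive; rewrite ?Ropp_0, ?Rplus_0_r, ?Rminus_0_r.
  - repeat split; nra.
  - field. repeat split; nra.
Qed.

Lemma coef_a_pos j : 0 < coef_a j.
Proof. unfold coef_a. assert (0 < (1 - p) ^ (j + w - 1)) by (apply pow_lt; lra). nra. Qed.

Lemma coef_b_pos k : 0 < coef_b k.
Proof.
  unfold coef_b. assert (0 < (1 - p) ^ (k + w - 1)) by (apply pow_lt; lra).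
  assert (0 < p ^ 2) by (apply pow_lt; lra). assert (Hw' := INR_w_pos).
  apply Rmult_lt_0_compat; [apply Rmult_lt_0_compat|]; lra.
Qed.

Lemma coef_c_pos N : 0 < coef_c N.
Proof.
  unfold coef_c. assert (0 < (1 - p) ^ (N + w)) by (apply pow_lt; lra).
  assert (Hw' := INR_w_pos). apply Rmult_lt_0_compat; [apply Rmult_lt_0_compat|]; lra.
Qed.

Lemma coef_a_sub_succ j : coef_a j - coef_a (S j) = coef_b j / INR w.
Proof.
  assert (Hw' := INR_w_pos). unfold coef_a, coef_b.
  replace (S j + w - 1)%nat with (S (j + w - 1)) by lia. simpl. field. lra.
Qed.

Lemma coef_a_last N : coef_a N = (coef_b N + coef_c N) / INR w.
Proof.
  assert (Hw' := INR_w_pos). unfold coef_a, coef_b, coef_c.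
  replace ((1 - p) ^ (N + w)) with ((1 - p) * (1 - p) ^ (N + w - 1))
    by (rewrite tech_pow_Rmult; f_equal; lia).
  field. lra.
Qed.

Lemma coef_c_succ N : coef_c N = coef_b (S N) + coef_c (S N).
Proof.
  unfold coef_b, coef_c.
  replace (S N + w - 1)%nat with (N + w)%nat by lia. replace (S N + w)%nat with (S (N + w)) by lia.
  simpl. ring.
Qed.

Lemma drate_lt s t : 0 <= s -> s < t -> drate t < drate s.
Proof.
  intros Hs Hst. assert (Hl := ln2_pos). unfold drate, Rdiv.
  apply Rmult_lt_compat_l; [lra|]. apply Rinv_lt_contravar.
  - apply Rmult_lt_0_compat; apply Rmult_lt_0_compat; nra.
  - apply Rmult_lt_compat_r; nra.
Qed.

Lemma drate_0 : drate 0 = INR w * residual_marginal B.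
Proof.
  assert (Hw' := INR_w_pos). unfold residual_marginal.
  replace ((B - B) / INR w) with 0 by (field; lra). field. lra.
Qed.

Lemma marginal_0_sub_succ j : marginal j 0 - marginal (S j) 0 = coef_b j * residual_marginal B.
Proof.
  assert (Hw' := INR_w_pos). unfold marginal.
  rewrite <- Rmult_minus_distr_r, coef_a_sub_succ, drate_0. field. lra.
Qed.

Lemma marginal_0_last N : marginal N 0 = (coef_b N + coef_c N) * residual_marginal B.
Proof.
  assert (Hw' := INR_w_pos). unfold marginal. rewrite coef_a_last, drate_0. field. lra.
Qed.

Lemma marginal_lt j s t : 0 <= s -> s < t -> marginal j t < marginal j s.
Proof.
  intros Hs Hst. apply Rmult_lt_compat_l; [apply coef_a_pos | apply drate_lt; assumption].
Qed.

Lemma marginal_le j s t : 0 <= s -> s <= t -> marginal j t <= marginal j s.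
Proof.
  intros Hs [Hst | ->]; [left; apply marginal_lt; assumption | lra].
Qed.

Lemma residual_marginal_lt s t : s < t -> t <= B -> residual_marginal s < residual_marginal t.
Proof.
  intros Hst Ht. assert (Hw' := INR_w_pos). unfold residual_marginal, Rdiv.
  apply Rmult_lt_compat_r; [apply Rinv_0_lt_compat; lra|]. apply drate_lt.
  - apply residual_share_nonneg; assumption.
  - apply Rmult_lt_compat_r; [apply Rinv_0_lt_compat|]; lra.
Qed.

Lemma residual_marginal_le s t : s <= t -> t <= B -> residual_marginal s <= residual_marginal t.
Proof.
  intros [Hst | ->] Ht; [left; apply residual_marginal_lt; assumption | lra].
Qed.

Lemma transfer_gain_pos_at_zero x j : x j = 0 -> 0 < x (S j) -> psum x j <= B ->
  0 < transfer_gain x j.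
Proof.
  intros Hz Hpos Hs. unfold transfer_gain. rewrite Hz.
  assert (marginal (S j) (x (S j)) < marginal (S j) 0) by (apply marginal_lt; lra).
  assert (coef_b j * residual_marginal (psum x j) <= coef_b j * residual_marginal B)
    by (apply Rmult_le_compat_l; [left; apply coef_b_pos | apply residual_marginal_le; lra]).
  pose proof (marginal_0_sub_succ j). lra.
Qed.

Lemma transfer_gain_neg_at_full x j : 0 < x j -> x (S j) = 0 -> psum x j = B ->
  transfer_gain x j < 0.
Proof.
  intros Hpos Hz Hs. unfold transfer_gain. rewrite Hz, Hs.
  assert (marginal j (x j) < marginal j 0) by (apply marginal_lt; lra).
  pose proof (marginal_0_sub_succ j). lra.
Qed.

Lemma last_gain_pos_at_zero N x : x N = 0 -> psum x N < B -> 0 < last_gain N x.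
Proof.
  intros Hz Hs. unfold last_gain. rewrite Hz, marginal_0_last.
  assert (0 < coef_b N + coef_c N) by (pose proof (coef_b_pos N); pose proof (coef_c_pos N); lra).
  assert (residual_marginal (psum x N) < residual_marginal B) by (apply residual_marginal_lt; lra).
  nra.
Qed.

Lemma last_gain_neg_at_full N x : 0 < x N -> psum x N = B -> last_gain N x < 0.
Proof.
  intros Hpos Hs. unfold last_gain. rewrite Hs, <- marginal_0_last.
  assert (marginal N (x N) < marginal N 0) by (apply marginal_lt; lra). lra.
Qed.

(** * First-order conditions at a maximizer *)

Lemma derive_nonpos_of_right_max (f : R -> R) (l d : R) : is_derive f 0 l -> 0 < d ->
  (forall e, 0 < e < d -> f e <= f 0) -> l <= 0.
Proof.
  intros Hf Hd Hmax. apply is_derive_Reals in Hf.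
  destruct (Rle_or_lt l 0) as [|Hl]; [assumption | exfalso].
  destruct (Hf l Hl) as [del Hdel].
  assert (Hdel_pos := cond_pos del).
  set (h := Rmin del d / 2).
  assert (Hh : 0 < h < del /\ h < d).
  { assert (0 < Rmin del d) by (apply Rmin_pos; lra).
    assert (Rmin del d <= del) by apply Rmin_l. assert (Rmin del d <= d) by apply Rmin_r.
    unfold h; lra. }
  assert (Hq : Rabs ((f (0 + h) - f 0) / h - l) < l)
    by (apply Hdel; [lra | rewrite Rabs_pos_eq; lra]).
  rewrite Rplus_0_l in Hq. apply Rabs_def2 in Hq.
  assert ((f h - f 0) / h <= 0).
  { apply Rmult_le_0_r; [apply Rle_minus, Hmax; lra | left; apply Rinv_0_lt_compat; lra]. }
  lra.
Qed.

Lemma derive_nonneg_of_left_max (f : R -> R) (l d : R) : is_derive f 0 l -> 0 < d ->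
  (forall e, 0 < e < d -> f (- e) <= f 0) -> 0 <= l.
Proof.
  intros Hf Hd Hmax.
  assert (Hg : is_derive (fun e => f (- e)) 0 (- l)).
  { replace (- l) with (scal (-1) l) by (unfold scal; simpl; unfold mult; simpl; ring).
    apply (is_derive_comp f Ropp); [rewrite Ropp_0; exact Hf | auto_derive; [exact I | ring]]. }
  assert (- l <= 0); [|lra].
  apply (derive_nonpos_of_right_max _ _ d Hg Hd). rewrite Ropp_0. exact Hmax.
Qed.

Section Maximizer.

Variables (N : nat) (x : nat -> R).
Hypotheses (HN : (1 <= N)%nat) (Hmax : is_maximizer p gamma B w N x).

Lemma maximizer_nonneg i : (1 <= i <= N)%nat -> 0 <= x i.
Proof. apply Hmax. Qed.

Lemma maximizer_psum_le k : (k <= N)%nat -> psum x k <= B.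
Proof. apply feasible_psum_le, Hmax. Qed.

Lemma maximizer_objective_ge y : feasible B N y -> objective N y <= objective N x.
Proof.
  intros Hy. destruct Hmax as [_ Hopt]. specialize (Hopt y Hy).
  rewrite !T_N_objective in Hopt by exact HN. lra.
Qed.

Lemma transfer_local_le j e : (1 <= j)%nat -> (j < N)%nat -> - x j <= e <= x (S j) ->
  transfer_local x j e <= transfer_local x j 0.
Proof.
  intros Hj HjN He.
  assert (Hfeas : feasible B N (transfer x j e)).
  { split.
    - intros i Hi. assert (0 <= x i) by (apply maximizer_nonneg; lia). unfold transfer, bump.
      destruct (Nat.eqb_spec i (S j)), (Nat.eqb_spec i j); subst; lia || lra.
    - rewrite psum_transfer by lia. unfold bump.
      destruct (Nat.eqb_spec N j); [lia | apply maximizer_psum_le; lia]. }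
  pose proof (maximizer_objective_ge _ Hfeas) as Hle.
  rewrite objective_transfer in Hle by lia. lra.
Qed.

Lemma last_local_le e : - x N <= e -> psum x N + e <= B -> last_local N x e <= last_local N x 0.
Proof.
  intros He Hs.
  assert (Hfeas : feasible B N (bump x N e)).
  { split.
    - intros i Hi. assert (0 <= x i) by (apply maximizer_nonneg; lia). unfold bump.
      destruct (Nat.eqb_spec i N); subst; lra.
    - rewrite psum_bump_upto by lia. unfold bump. rewrite Nat.eqb_refl. exact Hs. }
  pose proof (maximizer_objective_ge _ Hfeas) as Hle.
  rewrite objective_bump_last in Hle by exact HN. lra.
Qed.

Lemma is_derive_transfer_local_max j : (1 <= j)%nat -> (j < N)%nat ->
  is_derive (transfer_local x j) 0 (transfer_gain x j).
Proof.
  intros Hj HjN. apply is_derive_transfer_local;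
    [apply maximizer_nonneg | apply maximizer_nonneg | apply maximizer_psum_le]; lia.
Qed.

Lemma is_derive_last_local_max : is_derive (last_local N x) 0 (last_gain N x).
Proof.
  apply is_derive_last_local; [apply maximizer_nonneg; lia | apply maximizer_psum_le; lia].
Qed.

Lemma transfer_gain_nonpos j : (1 <= j)%nat -> (j < N)%nat -> 0 < x (S j) ->
  transfer_gain x j <= 0.
Proof.
  intros Hj HjN Hpos.
  apply (derive_nonpos_of_right_max _ _ _ (is_derive_transfer_local_max j Hj HjN) Hpos).
  intros e He. apply transfer_local_le; try lia.
  assert (0 <= x j) by (apply maximizer_nonneg; lia). lra.
Qed.

Lemma transfer_gain_nonneg j : (1 <= j)%nat -> (j < N)%nat -> 0 < x j ->
  0 <= transfer_gain x j.
Proof.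
  intros Hj HjN Hpos.
  apply (derive_nonneg_of_left_max _ _ _ (is_derive_transfer_local_max j Hj HjN) Hpos).
  intros e He. apply transfer_local_le; try lia.
  assert (0 <= x (S j)) by (apply maximizer_nonneg; lia). lra.
Qed.

Lemma last_gain_nonpos : psum x N < B -> last_gain N x <= 0.
Proof.
  intros Hs. apply (derive_nonpos_of_right_max _ _ (B - psum x N) is_derive_last_local_max); [lra|].
  intros e He. apply last_local_le; [|lra].
  assert (0 <= x N) by (apply maximizer_nonneg; lia). lra.
Qed.

Lemma last_gain_nonneg : 0 < x N -> 0 <= last_gain N x.
Proof.
  intros Hpos. apply (derive_nonneg_of_left_max _ _ _ is_derive_last_local_max Hpos).
  intros e He. apply last_local_le; [lra|].
  assert (psum x N <= B) by (apply maximizer_psum_le; lia). lra.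
Qed.

Lemma maximizer_zero_succ j : (1 <= j)%nat -> (j < N)%nat -> x j = 0 -> x (S j) = 0.
Proof.
  intros Hj HjN Hz.
  destruct (maximizer_nonneg (S j)) as [Hpos | Hz']; [lia | exfalso | auto].
  pose proof (transfer_gain_nonpos j Hj HjN Hpos).
  pose proof (transfer_gain_pos_at_zero x j Hz Hpos (maximizer_psum_le j ltac:(lia))). lra.
Qed.

Lemma maximizer_pos_or_slack k : (1 <= k <= N)%nat -> 0 < x k \/ psum x k < B.
Proof.
  induction k as [|k IH]; intros Hk; [lia|].
  destruct (maximizer_nonneg (S k) Hk) as [Hpos | Hz]; [left; exact Hpos | right].
  rewrite psum_S, <- Hz, Rplus_0_r.
  destruct (Nat.eq_dec k 0) as [-> | Hk0]; [rewrite psum_0; exact HB|].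
  destruct IH as [Hpos | Hs]; [lia | | exact Hs].
  destruct (maximizer_psum_le k ltac:(lia)) as [Hs | Hs]; [exact Hs | exfalso].
  pose proof (transfer_gain_nonneg k ltac:(lia) ltac:(lia) Hpos).
  pose proof (transfer_gain_neg_at_full x k Hpos (eq_sym Hz) Hs). lra.
Qed.

Lemma maximizer_last_pos : 0 < x N.
Proof.
  destruct (maximizer_nonneg N) as [Hpos | Hz]; [lia | exact Hpos | exfalso].
  destruct (maximizer_pos_or_slack N) as [Hpos | Hs]; [lia | lra |].
  pose proof (last_gain_nonpos Hs). pose proof (last_gain_pos_at_zero N x (eq_sym Hz) Hs). lra.
Qed.

Lemma maximizer_pos i : (1 <= i <= N)%nat -> 0 < x i.
Proof.
  intros Hi. destruct (maximizer_nonneg i Hi) as [Hpos | Hz]; [exact Hpos | exfalso].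
  assert (Hzero : forall k, (i <= k <= N)%nat -> x k = 0).
  { induction k as [|k IH]; intros Hk; [lia|].
    destruct (Nat.eq_dec i (S k)) as [<- | Hne]; [auto|].
    apply maximizer_zero_succ; [lia | lia | apply IH; lia]. }
  pose proof (Hzero N ltac:(lia)). pose proof maximizer_last_pos. lra.
Qed.

Lemma maximizer_slack : psum x N < B.
Proof.
  destruct (maximizer_psum_le N) as [Hs | Hs]; [lia | exact Hs | exfalso].
  pose proof (last_gain_nonneg maximizer_last_pos).
  pose proof (last_gain_neg_at_full N x maximizer_last_pos Hs). lra.
Qed.

Lemma maximizer_transfer_gain j : (1 <= j)%nat -> (j < N)%nat -> transfer_gain x j = 0.
Proof.
  intros Hj HjN.
  pose proof (transfer_gain_nonpos j Hj HjN (maximizer_pos (S j) ltac:(lia))).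
  pose proof (transfer_gain_nonneg j Hj HjN (maximizer_pos j ltac:(lia))). lra.
Qed.

Lemma maximizer_last_gain : last_gain N x = 0.
Proof.
  pose proof (last_gain_nonpos maximizer_slack).
  pose proof (last_gain_nonneg maximizer_last_pos). lra.
Qed.

End Maximizer.

(** * Comparison of consecutive maximizers *)

Definition transfer_balanced (N : nat) (x : nat -> R) : Prop :=
  feasible B N x /\ forall k, (1 <= k)%nat -> (k < N)%nat -> transfer_gain x k = 0.

Lemma maximizer_transfer_balanced N x : (1 <= N)%nat -> is_maximizer p gamma B w N x ->
  transfer_balanced N x.
Proof.
  intros HN Hmax. split; [apply Hmax | intros k Hk HkN; apply (maximizer_transfer_gain N); assumption].
Qed.

Lemma transfer_balanced_pred N x : transfer_balanced (S N) x -> transfer_balanced N x.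
Proof.
  intros [Hf Hcrit]. split; [apply feasible_pred, Hf | intros k Hk HkN; apply Hcrit; lia].
Qed.

Section Comparison.

Variables (N : nat) (x y : nat -> R).
Hypotheses (Hx : transfer_balanced N x) (Hy : transfer_balanced N y).

Lemma transfer_balanced_lt_of_first : y 1%nat < x 1%nat ->
  forall k, (1 <= k <= N)%nat -> y k < x k /\ psum y k < psum x k.
Proof.
  intros H1. destruct Hx as [Hfx Hcx], Hy as [Hfy Hcy].
  induction k as [|k IH]; intros Hk; [lia|].
  destruct (Nat.eq_dec k 0) as [-> | Hk0]; [rewrite !psum_S, !psum_0; lra|].
  destruct IH as [Hlt Hs]; [lia|].
  assert (Hnext : y (S k) < x (S k)).
  { destruct (Rlt_or_le (y (S k)) (x (S k))) as [| Hle]; [assumption | exfalso].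
    assert (marginal (S k) (y (S k)) <= marginal (S k) (x (S k)))
      by (apply marginal_le; [apply Hfx; lia | exact Hle]).
    assert (marginal k (x k) < marginal k (y k)) by (apply marginal_lt; [apply Hfy; lia | exact Hlt]).
    assert (coef_b k * residual_marginal (psum y k) < coef_b k * residual_marginal (psum x k))
      by (apply Rmult_lt_compat_l; [apply coef_b_pos | apply residual_marginal_lt; [exact Hs|]];
          apply (feasible_psum_le _ N); [exact Hfx | lia]).
    pose proof (Hcx k ltac:(lia) ltac:(lia)). pose proof (Hcy k ltac:(lia) ltac:(lia)).
    unfold transfer_gain in *. lra. }
  split; [exact Hnext | rewrite !(psum_S _ k); lra].
Qed.

Lemma transfer_balanced_le_of_first : x 1%nat <= y 1%nat ->
  forall k, (1 <= k <= N)%nat -> x k <= y k /\ psum x k <= psum y k.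
Proof.
  intros H1. destruct Hx as [Hfx Hcx], Hy as [Hfy Hcy].
  induction k as [|k IH]; intros Hk; [lia|].
  destruct (Nat.eq_dec k 0) as [-> | Hk0]; [rewrite !psum_S, !psum_0; lra|].
  destruct IH as [Hle Hs]; [lia|].
  assert (Hnext : x (S k) <= y (S k)).
  { destruct (Rlt_or_le (y (S k)) (x (S k))) as [Hlt |]; [exfalso | assumption].
    assert (marginal (S k) (x (S k)) < marginal (S k) (y (S k)))
      by (apply marginal_lt; [apply Hfy; lia | exact Hlt]).
    assert (marginal k (y k) <= marginal k (x k)) by (apply marginal_le; [apply Hfx; lia | exact Hle]).
    assert (coef_b k * residual_marginal (psum x k) <= coef_b k * residual_marginal (psum y k))
      by (apply Rmult_le_compat_l; [left; apply coef_b_pos | apply residual_marginal_le; [exact Hs|]];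
          apply (feasible_psum_le _ N); [exact Hfy | lia]).
    pose proof (Hcx k ltac:(lia) ltac:(lia)). pose proof (Hcy k ltac:(lia) ltac:(lia)).
    unfold transfer_gain in *. lra. }
  split; [exact Hnext | rewrite !(psum_S _ k); lra].
Qed.

End Comparison.

Lemma last_gain_antitone N x y :
  0 <= x N -> x N <= y N -> psum x N <= psum y N -> psum y N <= B -> last_gain N y <= last_gain N x.
Proof.
  intros Hx Hxy Hs HsB. unfold last_gain.
  assert (marginal N (y N) <= marginal N (x N)) by (apply marginal_le; assumption).
  assert (0 < coef_b N + coef_c N) by (pose proof (coef_b_pos N); pose proof (coef_c_pos N); lra).
  assert (residual_marginal (psum x N) <= residual_marginal (psum y N))
    by (apply residual_marginal_le; assumption).
  nra.
Qed.

Lemma maximizer_succ_last_gain_pos N y : (1 <= N)%nat -> is_maximizer p gamma B w (S N) y ->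
  0 < last_gain N y.
Proof.
  intros HN Hy.
  pose proof (maximizer_transfer_gain (S N) y ltac:(lia) Hy N HN ltac:(lia)) as Hcrit.
  pose proof (maximizer_last_gain (S N) y ltac:(lia) Hy) as Hlast.
  pose proof (maximizer_pos (S N) y ltac:(lia) Hy (S N) ltac:(lia)) as Hpos.
  pose proof (maximizer_slack (S N) y ltac:(lia) Hy) as Hslack.
  assert (residual_marginal (psum y N) < residual_marginal (psum y (S N)))
    by (apply residual_marginal_lt; [rewrite psum_S; lra | lra]).
  assert (coef_c N * residual_marginal (psum y N) < coef_c N * residual_marginal (psum y (S N)))
    by (apply Rmult_lt_compat_l; [apply coef_c_pos | assumption]).
  unfold transfer_gain, last_gain in *. rewrite <- coef_c_succ in Hlast. lra.
Qed.

Theorem maximizer_coord_decreasing N x y : (1 <= N)%nat ->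
  is_maximizer p gamma B w N x -> is_maximizer p gamma B w (S N) y ->
  forall j, (1 <= j <= N)%nat -> y j < x j.
Proof.
  intros HN Hx Hy.
  assert (Bx := maximizer_transfer_balanced N x HN Hx).
  assert (By := transfer_balanced_pred N y (maximizer_transfer_balanced (S N) y ltac:(lia) Hy)).
  assert (H1 : y 1%nat < x 1%nat).
  { destruct (Rlt_or_le (y 1%nat) (x 1%nat)) as [| Hle]; [assumption | exfalso].
    destruct (transfer_balanced_le_of_first N x y Bx By Hle N ltac:(lia)) as [HxyN HsN].
    pose proof (last_gain_antitone N x y (maximizer_nonneg N x Hx N ltac:(lia)) HxyN HsN
                  (maximizer_psum_le (S N) y Hy N ltac:(lia))).
    pose proof (maximizer_last_gain N x HN Hx).
    pose proof (maximizer_succ_last_gain_pos N y HN Hy). lra. }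
  intros j Hj. apply (transfer_balanced_lt_of_first N x y Bx By H1 j Hj).
Qed.

End Allocation.

Theorem lemma7 (p gamma B : R) (w : nat) (xi : nat -> nat -> R) :
  0 < p < 1 -> 0 < gamma -> 0 < B -> (1 <= w)%nat ->
  (forall N, (1 <= N)%nat -> is_maximizer p gamma B w N (xi N)) ->
  forall j N, (1 <= j)%nat -> (j <= N)%nat -> xi (S N) j < xi N j.
Proof.
  intros Hp Hgamma HB Hw Hmax j N Hj HjN.
  apply (maximizer_coord_decreasing p gamma B w Hp Hgamma HB Hw N); [lia | apply Hmax; lia .. | lia].
Qed.
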